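(* Let $1<p<\infty$ and let $a=\{a_k\}_{k\in\mathbb Z}$ be any sequence of complex numbers. Then $$A_p(a):=\Big(\sum_{k=0}^\infty\Big(2^{k/p'}\sup_{r\in\mathbb N_0}\min(1,2^{r-k})\,\widehat a_{2^r}\Big)^p\Big)^{1/p}\lesssim\Big(\sum_{k\in\mathbb Z}(|k|+1)^{p-2}|a_k|^p\Big)^{1/p},$$ with a constant depending only on $p$.
   Context: $p'=p/(p-1)$. For $r\ge0$, $\widehat a_{2^r}=\sup_{2^r\le|m|<2^{r+1}}\frac1{|m|+1}\big|\sum_{j=0}^m a_j\big|$, where for $m<0$ the sum $\sum_{j=0}^ma_j$ means $\sum_{j=m}^0a_j$. *)

From HB Require Import structures.
From mathcomp Require Import all_boot all_order all_algebra.
From mathcomp Require Import all_classical all_reals all_analysis.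
From mathcomp Require Import complex.
Set Implicit Arguments. Unset Strict Implicit. Unset Printing Implicit Defensive.
Import Order.TTheory GRing.Theory Num.Theory.
Local Open Scope ring_scope.

Definition cabs (R : realType) (z : R[i]) : R := Normc.normc z.

(* partial sum  \sum_{j=0}^m a_j  for m >= 0, and  \sum_{j=m}^0 a_j  for m < 0 *)
Definition psum (R : realType) (a : int -> R[i]) (m : int) : R[i] :=
  match m with
  | Posz n => \sum_(0 <= j < n.+1) a (Posz j)
  | Negz n => \sum_(0 <= j < n.+2) a (- (Posz j))
  end.

(* hat a_{2^r} = sup_{2^r <= |m| < 2^{r+1}} |sum_{j=0}^m a_j| / (|m|+1),
   as an extended real (a supremum over a finite nonempty set). *)
Definition ahat (R : realType) (a : int -> R[i]) (r : nat) : \bar R :=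
  ereal_sup [set ((cabs (psum a m)) / ((`|m|%N)%:R + 1))%:E
             | m in [set m : int | (2 ^ r <= `|m|)%N && (`|m| < 2 ^ r.+1)%N]].

Definition Ap (R : realType) (p : R) (a : int -> R[i]) : \bar R :=
  let p' := p / (p - 1) in
  ((\sum_(0 <= k <oo)
      poweR (((2 : R) `^ (k%:R / p'))%:E *
             ereal_sup [set (Num.min 1 ((2 : R) `^ (r%:R - k%:R)))%:E * ahat a r
                       | r in [set: nat]]) p)
   `^ (p^-1))%E.

Definition RHSp (R : realType) (p : R) (a : int -> R[i]) : \bar R :=
  ((\esum_(k in [set: int])
      ((((`|k|%N)%:R + 1) `^ (p - 2)) * (cabs (a k)) `^ p)%:E) `^ (p^-1))%E.

From HB Require Import structures.
From mathcomp Require Import all_boot all_order all_algebra.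
From mathcomp Require Import all_classical all_reals all_analysis.
From mathcomp Require Import complex.
From mathcomp Require Import ring zify.
Import Order.TTheory GRing.Theory Num.Theory.
Local Open Scope ring_scope.

(* Write b_j = |a_j| + |a_{-j}| and T_r = sum_{j < 2^(r+1)} b_j, so that
   hat a_{2^r} <= 2^-r T_r.  With m = max(k, r), the (k, r) term of A_p is at
   most 2^(k/p') 2^-m T_m.  Splitting T_m into dyadic blocks D_s (s <= m + 1)
   and putting rho = 2^(-1/p), tau = 2^(1/p - 1) (so that rho tau = 1/2 and
   2^(k/p') tau^k = 1), this is at most the tail sum
   V_k = sum_(r >= k) tau^(r-k) rho^r sum_(s <= r+1) D_s.  Two Schur tests with
   geometric kernels give sum_k V_k^p <~ sum_s rho^(sp) D_s^p = sum_s 2^-s D_s^p,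
   and Jensen's inequality on each block of length 2^s bounds 2^-s D_s^p, up to
   a constant, by the part of sum_j (|j|+1)^(p-2) |a_j|^p over that block. *)

Section FiniteSums.
Context {R : realType}.

Lemma hoelder_sum (p q : R) (f g : nat -> R) n :
  0 < p -> 0 < q -> p^-1 + q^-1 = 1 ->
  (forall i, 0 <= f i) -> (forall i, 0 <= g i) ->
  \sum_(i < n) f i * g i <=
  (\sum_(i < n) f i `^ p) `^ p^-1 * (\sum_(i < n) g i `^ q) `^ q^-1.
Proof.
move=> p0 q0 pq f0 g0; elim: n => [|n IH].
  by rewrite !big_ord0 mulr_ge0 // powR_ge0.
rewrite !big_ord_recr /=.
set S := \sum_(i < n) f i `^ p; set W := \sum_(i < n) g i `^ q.
apply: le_trans (lerD IH (lexx _)) _.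
have := @hoelder2 R (S `^ p^-1) (f n) (W `^ q^-1) (g n) p q
  (powR_ge0 _ _) (f0 n) (powR_ge0 _ _) (g0 n) p0 q0 pq.
by rewrite -!powRrM !mulVf ?gt_eqF // !powRr1 // sumr_ge0 // => i _; exact: powR_ge0.
Qed.

Lemma powR_wsum_le (p : R) (w y : nat -> R) n : 1 < p ->
  (forall i, 0 <= w i) -> (forall i, 0 <= y i) ->
  (\sum_(i < n) w i * y i) `^ p <=
  (\sum_(i < n) w i) `^ (p - 1) * \sum_(i < n) w i * y i `^ p.
Proof.
move=> p1 w0 y0.
have p0 : 0 < p by apply: lt_trans p1.
set q := p / (p - 1).
have q0 : 0 < q by rewrite divr_gt0 // subr_gt0.
have qV : q^-1 = 1 - p^-1 by rewrite /q invf_div; field; rewrite gt_eqF.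
have pq : p^-1 + q^-1 = 1 by rewrite qV addrC subrK.
have := @hoelder_sum p q (fun i => w i `^ p^-1 * y i) (fun i => w i `^ q^-1) n
  p0 q0 pq (fun i => mulr_ge0 (powR_ge0 _ _) (y0 i)) (fun i => powR_ge0 _ _).
have E1 i : w i `^ p^-1 * y i * w i `^ q^-1 = w i * y i.
  by rewrite mulrAC -powRD ?pq ?powRr1 // oner_eq0.
have E2 i : (w i `^ p^-1 * y i) `^ p = w i * y i `^ p.
  by rewrite powRM ?powR_ge0 // -powRrM mulVf ?gt_eqF // powRr1.
have E3 i : (w i `^ q^-1) `^ q = w i.
  by rewrite -powRrM mulVf ?gt_eqF // powRr1.
under eq_bigr do rewrite E1.
under [X in X `^ p^-1 * _]eq_bigr do rewrite E2.
under [X in _ * X `^ q^-1]eq_bigr do rewrite E3.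
move=> H.
have := ge0_ler_powR (ltW p0) _ _ H.
rewrite !nnegrE mulr_ge0 ?powR_ge0 ?sumr_ge0 // => [|i _]; last exact: mulr_ge0.
move=> /(_ isT isT).
rewrite powRM ?powR_ge0 // -!powRrM mulVf ?gt_eqF // powRr1; last first.
  by apply: sumr_ge0 => i _; rewrite mulr_ge0 ?powR_ge0.
have -> : q^-1 * p = p - 1 by rewrite qV mulrBl mul1r mulVf ?gt_eqF.
by rewrite mulrC.
Qed.

Lemma powR_sum_le (p : R) (y : nat -> R) n : 1 < p -> (forall i, 0 <= y i) ->
  (\sum_(i < n) y i) `^ p <= n%:R `^ (p - 1) * \sum_(i < n) y i `^ p.
Proof.
move=> p1 y0.
have := @powR_wsum_le p (fun _ => 1) y n p1 (fun _ => ler01) y0.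
by rewrite !(eq_bigr _ (fun i _ => mul1r _)) sumr_const card_ord.
Qed.

Lemma powR_addr_le (p x y : R) : 1 < p -> 0 <= x -> 0 <= y ->
  (x + y) `^ p <= 2 `^ (p - 1) * (x `^ p + y `^ p).
Proof.
move=> p1 x0 y0.
have := @powR_sum_le p (fun i => if i == 0%N then x else y) 2 p1.
by rewrite !big_ord_recr !big_ord0 /= !add0r; apply=> -[|i].
Qed.

Lemma schur_test (p : R) (K : nat -> nat -> R) (x : nat -> R) M L A B :
  1 < p -> (forall k s, 0 <= K k s) -> (forall s, 0 <= x s) -> 0 <= A ->
  (forall k, (k < M)%N -> \sum_(s < L) K k s <= A) ->
  (forall s, (s < L)%N -> \sum_(k < M) K k s <= B) ->
  \sum_(k < M) (\sum_(s < L) K k s * x s) `^ p <=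
  A `^ (p - 1) * B * \sum_(s < L) x s `^ p.
Proof.
move=> p1 K0 x0 A0 rowK colK.
have pm1 : 0 <= p - 1 by rewrite subr_ge0 ltW.
apply: (@le_trans _ _ (\sum_(k < M) A `^ (p - 1) * \sum_(s < L) K k s * x s `^ p)).
  apply: ler_sum => k _.
  apply: le_trans (@powR_wsum_le p (K k) x L p1 (K0 k) x0) _.
  apply: ler_wpM2r; first by apply: sumr_ge0 => s _; rewrite mulr_ge0 ?powR_ge0.
  apply: ge0_ler_powR; rewrite ?nnegrE ?rowK //.
  exact: sumr_ge0.
rewrite -mulr_sumr -mulrA; apply: ler_wpM2l; first exact: powR_ge0.
rewrite exchange_big /= mulr_sumr; apply: ler_sum => s _.
by rewrite -mulr_suml; apply: ler_wpM2r; rewrite ?powR_ge0 ?colK.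
Qed.

Lemma geometric_sum_le (r : R) n : 0 <= r < 1 -> \sum_(i < n) r ^+ i <= (1 - r)^-1.
Proof.
case/andP=> r0 r1.
have r1' : 0 < 1 - r by rewrite subr_gt0.
have E : \sum_(i < n) r ^+ i * (1 - r) = 1 - r ^+ n.
  elim: n => [|n IH]; first by rewrite big_ord0 expr0 subrr.
  by rewrite big_ord_recr /= IH exprS; ring.
rewrite -(ler_pM2r r1') mulVf ?gt_eqF // mulr_suml E.
by rewrite gerBl exprn_ge0.
Qed.

Lemma geometric_sum_from_le (r : R) c M : 0 <= r < 1 ->
  \sum_(k < M) (if (c <= k)%N then r ^+ (k - c) else 0) <= (1 - r)^-1.
Proof.
move=> r01.
suff -> : \sum_(k < M) (if (c <= k)%N then r ^+ (k - c) else 0) =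
          \sum_(i < M - c) r ^+ i by exact: geometric_sum_le.
elim: M => [|M IH]; first by rewrite !big_ord0.
rewrite big_ord_recr /= IH.
case: leqP => cM; first by rewrite subSn // big_ord_recr.
by rewrite addr0; have -> : (M.+1 - c = M - c)%N by lia.
Qed.

Lemma geometric_sum_upto_le (r : R) c L : 0 <= r < 1 ->
  \sum_(s < L) (if (s <= c)%N then r ^+ (c - s) else 0) <= (1 - r)^-1.
Proof.
move=> r01; apply: le_trans (geometric_sum_le r c.+1 r01).
case/andP: r01 => r0 _.
elim: L c => [|L IH] c.
  by rewrite big_ord0 sumr_ge0 // => i _; rewrite exprn_ge0.
rewrite big_ord_recl /=.
case: c => [|c].
  by rewrite big1 ?addr0 // big_ord_recl big_ord0 addr0.
rewrite subn0 [X in _ <= X]big_ord_recr /= addrC lerD2l.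
by apply: le_trans (IH c); apply: ler_sum => i _; rewrite /bump /= !add1n ltnS subSS.
Qed.

Lemma sum_dyadic_blocks (f : nat -> R) n :
  \sum_(s < n) \sum_(2 ^ s <= i < 2 ^ s.+1) f i = \sum_(1 <= i < 2 ^ n) f i.
Proof.
elim: n => [|n IH]; first by rewrite big_ord0 big_geq.
rewrite big_ord_recr /= IH -big_cat_nat //; first by rewrite expn_gt0.
by rewrite leq_exp2l.
Qed.

Lemma big_dyadic_block (F : nat -> R) s :
  \sum_(2 ^ s <= i < 2 ^ s.+1) F i = \sum_(i < 2 ^ s) F (i + 2 ^ s)%N.
Proof.
rewrite -{1}(add0n (2 ^ s)%N) big_addn.
have -> : (2 ^ s.+1 - 2 ^ s = 2 ^ s)%N by rewrite expnS mul2n -addnn addnK.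
by rewrite big_mkord.
Qed.

End FiniteSums.

(* The index [i] of a block stands for [j + 1], so that [i ^ (p - 2)] is the
   weight [(|j| + 1) ^ (p - 2)] of the term [b j]. *)
Definition block_sum {R : realType} (b : nat -> R) s :=
  \sum_(2 ^ s <= i < 2 ^ s.+1) b i.-1.
Definition block_weight {R : realType} (p : R) (b : nat -> R) s :=
  \sum_(2 ^ s <= i < 2 ^ s.+1) i%:R `^ (p - 2) * b i.-1 `^ p.
Definition dyadic_prefix {R : realType} (b : nat -> R) r :=
  \sum_(0 <= j < 2 ^ r.+1) b j.

Section DyadicBlocks.
Context {R : realType}.
Context {b : nat -> R}.
Hypothesis b_ge0 : forall j, 0 <= b j.

Lemma block_sum_ge0 s : 0 <= block_sum b s.
Proof. exact: sumr_ge0. Qed.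

Lemma dyadic_prefix_ge0 r : 0 <= dyadic_prefix b r.
Proof. exact: sumr_ge0. Qed.

Lemma dyadic_prefix_le_blocks r : dyadic_prefix b r <= \sum_(s < r.+2) block_sum b s.
Proof.
rewrite /block_sum sum_dyadic_blocks /dyadic_prefix big_add1 /=.
rewrite [X in _ <= X](big_cat_nat _ (n := 2 ^ r.+1)) //=; last first.
  by rewrite -ltnS prednK ?expn_gt0 // ltn_exp2l.
by rewrite lerDl sumr_ge0.
Qed.

Lemma dyadic_prefix_homo : {homo dyadic_prefix b : r r' / (r <= r')%N >-> r <= r'}.
Proof.
move=> r r' rr'; rewrite /dyadic_prefix (big_cat_nat _ (n := 2 ^ r.+1) (p := 2 ^ r'.+1)) //=.
  by rewrite lerDl sumr_ge0.
by rewrite leq_exp2l.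
Qed.

Lemma block_sum_powR_le (p : R) s : 1 < p ->
  block_sum b s `^ p <= 2 * 2 ^+ s * block_weight p b s.
Proof.
move=> p1; rewrite /block_sum /block_weight !big_dyadic_block.
apply: le_trans (powR_sum_le p (fun i => b (i + 2 ^ s)%N.-1) (2 ^ s) p1 (fun i => b_ge0 _)) _.
rewrite !mulr_sumr; apply: ler_sum => i _.
rewrite mulrA; apply: ler_wpM2r; first exact: powR_ge0.
set X : R := 2 ^+ s; set I : R := (i + 2 ^ s)%N%:R.
have X0 : 0 < X by rewrite exprn_gt0.
have XE : (2 ^ s)%N%:R = X by rewrite natrX.
have I0 : 0 < I by rewrite /I ltr0n addn_gt0 expn_gt0 orbT.
have XI : X <= I by rewrite /I natrD XE lerDr.
have I2X : I <= 2 * X.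
  by rewrite /I natrD XE mulr2n mulrDl mul1r lerD2r -XE ler_nat ltnW.
have IpE : I * I `^ (p - 2) = I `^ (p - 1).
  have -> : p - 2 = (p - 1) - 1 by ring.
  by apply: mulr_powRB1 (ltW I0) _; rewrite subr_gt0.
have XpI : X `^ (p - 1) <= I `^ (p - 1).
  by apply: ge0_ler_powR => //; rewrite ?nnegrE ?subr_ge0; apply: ltW.
rewrite XE -(ler_pM2l I0) [X in _ <= X]mulrA [I * (2 * X)]mulrC -[X in _ <= X]mulrA IpE.
rewrite mulrC [X in _ <= X]mulrC.
by apply: ler_pM => //; rewrite ?powR_ge0 // ltW.
Qed.

End DyadicBlocks.

Section TailSums.
Context {R : realType}.
Variable p : R.
Hypothesis p_gt1 : 1 < p.
Variable b : nat -> R.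
Hypothesis b_ge0 : forall j, 0 <= b j.
Variables rho tau : R.
Hypothesis rho01 : 0 < rho < 1.
Hypothesis tau01 : 0 < tau < 1.
Hypothesis rho_powR : forall s, (rho ^+ s) `^ p = (2 ^+ s)^-1.
Hypothesis tau_powR : forall k : nat, 2 `^ (k%:R / (p / (p - 1))) * tau ^+ k = 1.
Hypothesis rho_tau : rho * tau = 2^-1.

Let rho_gt0 : 0 < rho. Proof. by case/andP: rho01. Qed.
Let rho_ge0 : 0 <= rho. Proof. exact: ltW. Qed.
Let tau_ge0 : 0 <= tau. Proof. by case/andP: tau01 => /ltW. Qed.
Let rho01' : 0 <= rho < 1. Proof. by case/andP: rho01 => /ltW -> ->. Qed.
Let tau01' : 0 <= tau < 1. Proof. by case/andP: tau01 => /ltW -> ->. Qed.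

Definition damped_block s := rho ^+ s * block_sum b s.
Definition damped_prefix r := rho ^+ r * \sum_(s < r.+2) block_sum b s.
Definition prefix_kernel r s :=
  if (s <= r.+1)%N then rho^-1 * rho ^+ (r.+1 - s) else 0.
Definition tail_kernel k r := if (k <= r)%N then tau ^+ (r - k) else 0.
Definition tail_sum k N := \sum_(r < N) tail_kernel k r * damped_prefix r.
Definition prefix_bound := rho^-1 * (1 - rho)^-1.
Definition prefix_const := prefix_bound `^ (p - 1) * prefix_bound * 2.
Definition schur_const := (1 - tau)^-1 `^ (p - 1) * (1 - tau)^-1 * prefix_const.

Lemma schur_const_gt0 : 0 < schur_const.
Proof.
have [_ rho_lt1] := andP rho01; have [_ tau_lt1] := andP tau01.
have A_gt0 : 0 < prefix_bound by rewrite mulr_gt0 ?invr_gt0 ?subr_gt0.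
by rewrite !mulr_gt0 ?powR_gt0 ?invr_gt0 ?subr_gt0.
Qed.

Lemma damped_block_ge0 s : 0 <= damped_block s.
Proof. by rewrite mulr_ge0 ?exprn_ge0 ?block_sum_ge0. Qed.

Lemma damped_prefix_ge0 r : 0 <= damped_prefix r.
Proof. by rewrite mulr_ge0 ?exprn_ge0 ?sumr_ge0 // => s _; exact: block_sum_ge0. Qed.

Lemma prefix_kernel_ge0 r s : 0 <= prefix_kernel r s.
Proof. by rewrite /prefix_kernel; case: ifP; rewrite ?mulr_ge0 ?invr_ge0 ?exprn_ge0. Qed.

Lemma tail_kernel_ge0 k r : 0 <= tail_kernel k r.
Proof. by rewrite /tail_kernel; case: ifP; rewrite ?exprn_ge0. Qed.

Lemma tail_sum_ge0 k N : 0 <= tail_sum k N.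
Proof.
by apply: sumr_ge0 => r _; rewrite mulr_ge0 ?tail_kernel_ge0 ?damped_prefix_ge0.
Qed.

Lemma tail_sum_homo k : {homo tail_sum k : N N' / (N <= N')%N >-> N <= N'}.
Proof.
move=> N N' NN'; rewrite /tail_sum.
rewrite -!(big_mkord xpredT (fun r => tail_kernel k r * damped_prefix r)).
rewrite (big_cat_nat _ (n := N) (p := N')) //= lerDl.
by apply: sumr_ge0 => r _; rewrite mulr_ge0 ?tail_kernel_ge0 ?damped_prefix_ge0.
Qed.

Lemma damped_prefixE r L : (r.+2 <= L)%N ->
  damped_prefix r = \sum_(s < L) prefix_kernel r s * damped_block s.
Proof.
move=> rL; rewrite -(big_mkord xpredT (fun s => prefix_kernel r s * damped_block s)).
rewrite (big_cat_nat _ (n := r.+2)) //= [X in _ + X]big_nat_cond [X in _ + X]big1.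
  rewrite addr0 big_mkord /damped_prefix mulr_sumr; apply: eq_bigr => s _.
  have sr : (s <= r.+1)%N by rewrite -ltnS.
  rewrite /prefix_kernel /damped_block sr mulrA; congr (_ * _).
  by rewrite -mulrA -exprD subnK // exprS mulKf // gt_eqF.
move=> s /andP[/andP[rs _] _]; rewrite /prefix_kernel ifF ?mul0r //.
by apply/negbTE; rewrite -ltnNge.
Qed.

Lemma prefix_kernel_row_le r L : \sum_(s < L) prefix_kernel r s <= prefix_bound.
Proof.
apply: (@le_trans _ _ (rho^-1 * \sum_(s < L)
   (if (s <= r.+1)%N then rho ^+ (r.+1 - s) else 0))).
  rewrite mulr_sumr; apply: ler_sum => s _.
  by rewrite /prefix_kernel; case: ifP; rewrite ?mulr0.
by apply: ler_wpM2l; rewrite ?invr_ge0 // geometric_sum_upto_le.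
Qed.

Lemma prefix_kernel_col_le s N : \sum_(r < N) prefix_kernel r s <= prefix_bound.
Proof.
apply: (@le_trans _ _ (rho^-1 * \sum_(r < N.+1)
   (if (s <= r)%N then rho ^+ (r - s) else 0))).
  rewrite [X in _ <= _ * X]big_ord_recl mulrDr mulr_sumr -[X in X <= _]add0r.
  apply: lerD; first by rewrite mulr_ge0 ?invr_ge0 //; case: ifP; rewrite ?exprn_ge0.
  by apply: ler_sum => i _; rewrite lift0 /prefix_kernel; case: ifP; rewrite ?mulr0.
by apply: ler_wpM2l; rewrite ?invr_ge0 // geometric_sum_from_le.
Qed.

Lemma sum_damped_prefix_powR_le N :
  \sum_(r < N) damped_prefix r `^ p <= prefix_const * \sum_(s < N.+1) block_weight p b s.
Proof.
have A_ge0 : 0 <= prefix_bound.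
  by rewrite mulr_ge0 ?invr_ge0 ?subr_ge0 //; case/andP: rho01 => _ /ltW.
have -> : \sum_(r < N) damped_prefix r `^ p =
    \sum_(r < N) (\sum_(s < N.+1) prefix_kernel r s * damped_block s) `^ p.
  by apply: eq_bigr => r _; rewrite (@damped_prefixE r N.+1 (ltn_ord r)).
apply: le_trans (schur_test p prefix_kernel damped_block N N.+1 _ _ p_gt1
  prefix_kernel_ge0 damped_block_ge0 A_ge0
  (fun r _ => prefix_kernel_row_le r N.+1) (fun s _ => prefix_kernel_col_le s N)) _.
rewrite /prefix_const -[_ * 2 * _]mulrA.
apply: ler_wpM2l; first by rewrite mulr_ge0 ?powR_ge0.
rewrite mulr_sumr; apply: ler_sum => s _.
rewrite /damped_block powRM ?exprn_ge0 ?block_sum_ge0 // rho_powR.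
apply: le_trans (ler_wpM2l _ (block_sum_powR_le b_ge0 p s p_gt1)) _.
  by rewrite invr_ge0 exprn_ge0.
by rewrite mulrA mulrCA mulVf ?mulr1 ?gt_eqF ?exprn_gt0.
Qed.

Lemma tail_sum_powR_le N :
  \sum_(k < N) tail_sum k N `^ p <= schur_const * \sum_(s < N.+1) block_weight p b s.
Proof.
have B_ge0 : 0 <= (1 - tau)^-1.
  by rewrite invr_ge0 subr_ge0; case/andP: tau01 => _ /ltW.
apply: le_trans (schur_test p tail_kernel damped_prefix N N _ _ p_gt1
  tail_kernel_ge0 damped_prefix_ge0 B_ge0
  (fun k _ => geometric_sum_from_le tau k N tau01')
  (fun r _ => geometric_sum_upto_le tau r N tau01')) _.
rewrite /schur_const -[_ * prefix_const * _]mulrA.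
apply: ler_wpM2l; first by rewrite mulr_ge0 ?powR_ge0.
exact: sum_damped_prefix_powR_le.
Qed.

Lemma dyadic_term_le_tail_sum k r N : (k < N)%N -> (r < N)%N ->
  2 `^ (k%:R / (p / (p - 1))) * Num.min 1 (2 `^ (r%:R - k%:R)) *
    (dyadic_prefix b r / 2 ^+ r) <= tail_sum k N.
Proof.
move=> kN rN; set c := 2 `^ (k%:R / (p / (p - 1))); set m := maxn k r.
have c_ge0 : 0 <= c by exact: powR_ge0.
have mN : (m < N)%N by rewrite gtn_max kN rN.
have km : (k <= m)%N by rewrite leq_maxl.
have P_ge0 := dyadic_prefix_ge0 b_ge0.
have to_max : c * Num.min 1 (2 `^ (r%:R - k%:R)) * (dyadic_prefix b r / 2 ^+ r) <=
    c * (dyadic_prefix b m / 2 ^+ m).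
  rewrite -mulrA; apply: ler_wpM2l => //.
  case: (leqP k r) => kr.
    rewrite /m (maxn_idPr kr) -[X in _ <= X]mul1r.
    by apply: ler_wpM2r; rewrite ?divr_ge0 ?exprn_ge0 ?ge_min ?lexx.
  rewrite /m (maxn_idPl (ltnW kr)).
  have -> : 2 `^ (r%:R - k%:R) = 2 ^+ r / 2 ^+ k :> R.
    by rewrite powRB ?powR_mulrn //; apply/implyP => _; rewrite pnatr_eq0.
  apply: (@le_trans _ _ (2 ^+ r / 2 ^+ k * (dyadic_prefix b r / 2 ^+ r))).
    by apply: ler_wpM2r; rewrite ?divr_ge0 ?exprn_ge0 // ge_min lexx orbT.
  have -> : 2 ^+ r / 2 ^+ k * (dyadic_prefix b r / 2 ^+ r) =
      dyadic_prefix b r / 2 ^+ k :> R.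
    by field; rewrite ?expf_neq0 ?pnatr_eq0.
  by apply: ler_wpM2r; rewrite ?invr_ge0 ?exprn_ge0 ?dyadic_prefix_homo // ltnW.
apply: le_trans to_max _.
have prefix_damped : dyadic_prefix b m / 2 ^+ m <= tau ^+ m * damped_prefix m.
  rewrite /damped_prefix mulrA -exprMn [tau * rho]mulrC rho_tau exprVn.
  by rewrite [X in _ <= X]mulrC ler_wpM2r ?invr_ge0 ?exprn_ge0 ?dyadic_prefix_le_blocks.
apply: le_trans (ler_wpM2l c_ge0 prefix_damped) _.
have -> : c * (tau ^+ m * damped_prefix m) = tail_kernel k m * damped_prefix m.
  rewrite /tail_kernel km mulrA; congr (_ * _).
  by rewrite -(subnK km) exprD mulrC -mulrA [tau ^+ k * c]mulrC tau_powR mulr1 subnK.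
rewrite /tail_sum (bigD1 (Ordinal mN)) //= lerDl.
by apply: sumr_ge0 => i _; rewrite mulr_ge0 ?tail_kernel_ge0 ?damped_prefix_ge0.
Qed.

End TailSums.

Lemma powR2X {R : realType} (x : R) n : (2 `^ x) ^+ n = 2 `^ (x * n%:R).
Proof. by rewrite powRrM powR_mulrn // powR_ge0. Qed.

Lemma powR2_lt1 {R : realType} (x : R) : x < 0 -> 0 < 2 `^ x < 1.
Proof.
move=> x_lt0; rewrite powR_gt0 //= lt_neqAle powR_eq1 negb_or pnatr_eq1 /= negb_or.
rewrite ltNge ler0n /= lt_eqF //=.
by rewrite -[leRHS](powRr0 2) ler_powR ?ler1n // ltW.
Qed.

Definition dyadic_rho {R : realType} (p : R) := 2 `^ (- p^-1) : R.
Definition dyadic_tau {R : realType} (p : R) := 2 `^ (p^-1 - 1) : R.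

Section DyadicConstants.
Context {R : realType} {p : R}.
Hypothesis p_gt1 : 1 < p.

Let p_gt0 : 0 < p. Proof. exact: lt_trans p_gt1. Qed.

Lemma dyadic_rho01 : 0 < dyadic_rho p < 1.
Proof. by apply: powR2_lt1; rewrite oppr_lt0 invr_gt0. Qed.

Lemma dyadic_tau01 : 0 < dyadic_tau p < 1.
Proof. by apply: powR2_lt1; rewrite subr_lt0 invf_lt1. Qed.

Lemma dyadic_rho_powR s : (dyadic_rho p ^+ s) `^ p = (2 ^+ s)^-1.
Proof.
rewrite /dyadic_rho powR2X -powRrM.
have -> : - p^-1 * s%:R * p = - s%:R by field; rewrite gt_eqF.
by rewrite powR_invn.
Qed.

Lemma dyadic_tau_powR (k : nat) : 2 `^ (k%:R / (p / (p - 1))) * dyadic_tau p ^+ k = 1.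
Proof.
rewrite /dyadic_tau powR2X -powRD; last by apply/implyP.
have -> : k%:R / (p / (p - 1)) + (p^-1 - 1) * k%:R = 0.
  by field; rewrite subr_eq0 !gt_eqF.
by rewrite powRr0.
Qed.

Lemma dyadic_rho_tau : dyadic_rho p * dyadic_tau p = 2^-1.
Proof.
rewrite /dyadic_rho /dyadic_tau -powRD; last by apply/implyP.
by rewrite addrA addNr add0r powR_inv1.
Qed.

End DyadicConstants.

Lemma cabs_ge0 {R : realType} (z : R[i]) : 0 <= cabs z.
Proof. by case: z => x y; rewrite /cabs /= sqrtr_ge0. Qed.

Lemma cabs_sum_le {R : realType} (F : nat -> R[i]) m n :
  cabs (\sum_(m <= j < n) F j) <= \sum_(m <= j < n) cabs (F j).
Proof.
elim/big_ind2: _ => [|x1 x2 y1 y2 h1 h2|//].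
  by rewrite /cabs /= expr0n /= addr0 sqrtr0.
exact: le_trans (le_normcD _ _) (lerD h1 h2).
Qed.

Definition sym_cabs {R : realType} (a : int -> R[i]) j :=
  cabs (a (Posz j)) + cabs (a (- Posz j)).

Lemma sym_cabs_ge0 {R : realType} (a : int -> R[i]) j : 0 <= sym_cabs a j.
Proof. by rewrite addr_ge0 ?cabs_ge0. Qed.

Section PartialSums.
Context {R : realType}.
Variable a : int -> R[i].

Lemma cabs_psum_le m r : (2 ^ r <= `|m|)%N -> (`|m| < 2 ^ r.+1)%N ->
  cabs (psum a m) <= dyadic_prefix (sym_cabs a) r.
Proof.
have prefix_le n : (n <= 2 ^ r.+1)%N ->
    \sum_(0 <= j < n) sym_cabs a j <= dyadic_prefix (sym_cabs a) r.
  move=> n_le; rewrite /dyadic_prefix [X in _ <= X](big_cat_nat _ (n := n)) //= lerDl.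
  by apply: sumr_ge0 => j _; exact: sym_cabs_ge0.
case: m => n /= _ n_lt; apply: le_trans (cabs_sum_le _ _ _) _.
  apply: le_trans (prefix_le _ n_lt).
  by apply: ler_sum => j _; rewrite lerDl cabs_ge0.
apply: le_trans (prefix_le _ n_lt).
by apply: ler_sum => j _; rewrite lerDr cabs_ge0.
Qed.

Lemma ahat_le r : (ahat a r <= (dyadic_prefix (sym_cabs a) r / 2 ^+ r)%:E)%E.
Proof.
apply: ge_ereal_sup => _ [m /andP[m_ge m_lt] <-]; rewrite lee_fin.
have pow_gt0 : (0 : R) < 2 ^+ r by rewrite exprn_gt0.
have pow_le : (2 ^+ r : R) <= (`|m|%N)%:R + 1.
  by rewrite (le_trans _ (ler_wpDr ler01 (lexx _))) // -natrX ler_nat.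
apply: (@le_trans _ _ (dyadic_prefix (sym_cabs a) r / ((`|m|%N)%:R + 1))).
  apply: ler_wpM2r; first by rewrite invr_ge0 (le_trans (ltW pow_gt0)).
  exact: cabs_psum_le.
apply: ler_wpM2l; first exact: (dyadic_prefix_ge0 (sym_cabs_ge0 a)).
by rewrite lef_pV2 // posrE (lt_le_trans pow_gt0).
Qed.

Lemma ahat_ge0 r : (0 <= ahat a r)%E.
Proof.
apply: (@le_trans _ _ (cabs (psum a (2 ^ r)%N) / ((`|Posz (2 ^ r)|%N)%:R + 1))%:E).
  by rewrite lee_fin divr_ge0 ?cabs_ge0 // addr_ge0.
apply: ereal_sup_ubound; exists (Posz (2 ^ r)) => //=.
by rewrite leqnn /= ltn_exp2l.
Qed.

End PartialSums.

Section MonotoneBounds.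
Context {R : realType}.
Local Open Scope ereal_scope.
Variables (Y : nat -> \bar R) (h : nat -> nat -> R).
Hypothesis Y_ge0 : forall k, 0 <= Y k.
Hypothesis h_ge0 : forall k n, (0 <= h k n)%R.
Hypothesis h_homo : forall k, {homo h k : n n' / (n <= n')%N >-> (n <= n')%R}.
Hypothesis Y_le : forall k c, (forall n, (h k n <= c)%R) -> Y k <= c%:E.

Lemma sum_le_of_bounded_sums K M :
  (forall n, (\sum_(k < K) h k n <= M)%R) -> \sum_(k < K) Y k <= M%:E.
Proof.
elim: K M => [|K IH] M HM.
  by rewrite big_ord0 lee_fin; have := HM 0%N; rewrite big_ord0.
rewrite big_ord_recr /=; set S := \sum_(k < K) Y k.
have S_le n0 : S <= (M - h K n0)%:E.
  apply: IH => n; have := HM (maxn n n0); rewrite big_ord_recr /= => HMn.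
  apply: (@le_trans _ _ (\sum_(k < K) h k (maxn n n0))%R).
    by apply: ler_sum => k _; apply: h_homo; rewrite leq_maxl.
  rewrite lerBrDr; apply: le_trans HMn; apply: lerD => //.
  by apply: h_homo; rewrite leq_maxr.
have S_fin : S \is a fin_num.
  by rewrite ge0_fin_numE ?sume_ge0 // (le_lt_trans (S_le 0%N)) // ltey.
rewrite -(fineK S_fin).
have YK_le : Y K <= (M - fine S)%:E.
  apply: Y_le => n; have := S_le n; rewrite -(fineK S_fin) lee_fin.
  by rewrite lerBrDr addrC -lerBrDr.
by apply: le_trans (leeD (lexx _) YK_le) _; rewrite -EFinD addrC subrK.
Qed.

Lemma nneseries_le_of_diagonal_sums M :
  (forall N, (\sum_(k < N) h k N <= M)%R) -> \sum_(0 <= k <oo) Y k <= M%:E.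
Proof.
move=> HM.
have := @ereal_nondecreasing_series R Y xpredT 0%N (fun n _ _ => Y_ge0 n).
move/ereal_nondecreasing_cvgn/cvg_lim => -> //.
apply: ge_ereal_sup => _ [K _ <-]; rewrite big_mkord.
apply: sum_le_of_bounded_sums => n; set N := maxn K n.
apply: (@le_trans _ _ (\sum_(k < K) h k N)%R).
  by apply: ler_sum => k _; apply: h_homo; rewrite leq_maxr.
apply: le_trans (HM N).
rewrite -!(big_mkord xpredT (fun k => h k N)) [leRHS](big_cat_nat _ (n := K)) ?leq_maxl //=.
by rewrite lerDl sumr_ge0.
Qed.

End MonotoneBounds.

Lemma sum_le_esum {R : realType} (G : int -> R) (f : nat -> int) n :
  injective f -> (forall x, 0 <= G x) ->
  ((\sum_(0 <= j < n) G (f j))%:E <= \esum_(x in [set: int]) (G x)%:E)%E.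
Proof.
move=> f_inj G_ge0; apply: esum_ge.
exists (f @` `I_n)%classic; first by split=> //; exact/finite_image/finite_II.
rewrite fsbig_image; last by move=> x y _ _; exact: f_inj.
by rewrite -fsbig_ord big_mkord sumEFin.
Qed.

Definition weighted_term {R : realType} (p : R) (a : int -> R[i]) (k : int) : R :=
  ((`|k|%N)%:R + 1) `^ (p - 2) * cabs (a k) `^ p.

Lemma sum_block_weight_le {R : realType} (p : R) (a : int -> R[i]) N e : 1 < p ->
  (\esum_(k in [set: int]) (weighted_term p a k)%:E)%E = e%:E ->
  \sum_(s < N.+1) block_weight p (sym_cabs a) s <= 2 `^ (p - 1) * (e + e).
Proof.
move=> p_gt1 esumE.
have G_ge0 k : 0 <= weighted_term p a k by rewrite mulr_ge0 ?powR_ge0.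
rewrite /block_weight sum_dyadic_blocks big_add1 /=.
set n := (2 ^ N.+1).-1.
apply: (@le_trans _ _ (\sum_(0 <= j < n)
    2 `^ (p - 1) * (weighted_term p a j + weighted_term p a (- Posz j)))).
  apply: ler_sum => j _.
  rewrite /weighted_term abszN /= natr1 -mulrDr mulrCA.
  by apply: ler_wpM2l; rewrite ?powR_ge0 ?powR_addr_le ?cabs_ge0.
rewrite -mulr_sumr big_split /=; apply: ler_wpM2l; first exact: powR_ge0.
have pos_le := @sum_le_esum _ _ (fun j => Posz j) n ltac:(by move=> x y []) G_ge0.
have neg_le := @sum_le_esum _ _ (fun j => - Posz j) n
  ltac:(by move=> x y /oppr_inj []) G_ge0.
by rewrite esumE lee_fin in pos_le neg_le; exact: lerD.
Qed.

Definition Ap_term {R : realType} (p : R) (a : int -> R[i]) (k : nat) : \bar R :=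
  ((2 : R) `^ (k%:R / (p / (p - 1))))%:E *
  ereal_sup [set (Num.min 1 ((2 : R) `^ (r%:R - k%:R)))%:E * ahat a r | r in [set: nat]].

Lemma ApE {R : realType} (p : R) (a : int -> R[i]) :
  Ap p a = ((\sum_(0 <= k <oo) poweR (Ap_term p a k) p) `^ p^-1)%E.
Proof. by []. Qed.

Definition hardy_const {R : realType} (p : R) :=
  schur_const p (dyadic_rho p) (dyadic_tau p) * (2 `^ (p - 1) * 2).

Lemma hardy_const_gt0 {R : realType} {p : R} : 1 < p -> 0 < hardy_const p.
Proof.
move=> p_gt1; apply: mulr_gt0; last by rewrite mulr_gt0 ?powR_gt0.
by apply: schur_const_gt0; [exact: dyadic_rho01 | exact: dyadic_tau01].
Qed.

Section ApBound.
Context {R : realType}.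
Variable p : R.
Hypothesis p_gt1 : 1 < p.
Variable a : int -> R[i].

Let p_gt0 : 0 < p. Proof. exact: lt_trans p_gt1. Qed.
Let b := sym_cabs a.
Let b_ge0 : forall j, 0 <= b j. Proof. exact: sym_cabs_ge0. Qed.
Let rho := dyadic_rho p.
Let tau := dyadic_tau p.
Let rho01 : 0 < rho < 1. Proof. exact: dyadic_rho01. Qed.
Let tau01 : 0 < tau < 1. Proof. exact: dyadic_tau01. Qed.
Let tail_sum_a := tail_sum b rho tau.
Let tail_sum_a_ge0 k N : 0 <= tail_sum_a k N.
Proof. exact: (@tail_sum_ge0 R b b_ge0 rho tau rho01 tau01). Qed.

Lemma Ap_term_ge0 k : (0 <= Ap_term p a k)%E.
Proof.
rewrite mule_ge0 ?lee_fin ?powR_ge0 //.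
apply: le_trans (ereal_sup_ubound (ex_intro2 _ _ 0%N I erefl)).
by rewrite mule_ge0 ?ahat_ge0 // lee_fin le_min ler01 powR_ge0.
Qed.

Lemma Ap_term_le k c : (forall N, tail_sum_a k N <= c) -> (Ap_term p a k <= c%:E)%E.
Proof.
move=> tail_le; set w := 2 `^ (k%:R / (p / (p - 1))).
have w_gt0 : 0 < w by exact: powR_gt0.
suff sup_le : (ereal_sup [set (Num.min 1 ((2 : R) `^ (r%:R - k%:R)))%:E * ahat a r
    | r in [set: nat]] <= (c / w)%:E)%E.
  apply: le_trans (lee_wpmul2l _ sup_le) _; first by rewrite lee_fin ltW.
  by rewrite -EFinM mulrCA mulfV ?gt_eqF // mulr1.
apply: ge_ereal_sup => _ [r _ <-].
apply: le_trans (lee_wpmul2l _ (ahat_le a r)) _.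
  by rewrite lee_fin le_min ler01 powR_ge0.
rewrite -EFinM lee_fin ler_pdivlMr // mulrC mulrA.
apply: le_trans (tail_le (maxn k r).+1).
apply: (@dyadic_term_le_tail_sum R p b b_ge0 rho tau rho01 tau01 (dyadic_tau_powR p_gt1)
  (dyadic_rho_tau (p := p))).
  by rewrite ltnS leq_maxl.
by rewrite ltnS leq_maxr.
Qed.

Lemma Ap_term_powR_le k c :
  (forall N, tail_sum_a k N `^ p <= c) -> (Ap_term p a k `^ p <= c%:E)%E.
Proof.
move=> tail_le; have c_ge0 : 0 <= c by exact: le_trans (powR_ge0 _ _) (tail_le 0%N).
have -> : c = (c `^ p^-1) `^ p by rewrite -powRrM mulVf ?gt_eqF // powRr1.
rewrite -poweR_EFin; apply: gt0_ler_poweR; first exact: ltW.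
- by rewrite in_itv /= Ap_term_ge0 leey.
- by rewrite in_itv /= lee_fin powR_ge0 leey.
apply: Ap_term_le => N; rewrite -[leLHS](powRr1 (tail_sum_a_ge0 k N)).
rewrite -(mulfV (negbT (gt_eqF p_gt0))) powRrM.
by apply: ge0_ler_powR; rewrite ?nnegrE ?invr_ge0 ?powR_ge0 ?tail_le // ltW.
Qed.

Lemma Ap_series_le e :
  (\esum_(k in [set: int]) (weighted_term p a k)%:E)%E = e%:E ->
  (\sum_(0 <= k <oo) Ap_term p a k `^ p <= (hardy_const p * e)%:E)%E.
Proof.
move=> esumE.
apply: (@nneseries_le_of_diagonal_sums _ _ (fun k N => tail_sum_a k N `^ p)).
- by move=> k; exact: poweR_ge0.
- by move=> k N; exact: powR_ge0.
- move=> k N N' NN'; apply: ge0_ler_powR; rewrite ?nnegrE ?tail_sum_a_ge0 ?(ltW p_gt0) //.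
  exact: (@tail_sum_homo R b b_ge0 rho tau rho01 tau01).
- exact: Ap_term_powR_le.
move=> N; apply: le_trans (@tail_sum_powR_le R p p_gt1 b b_ge0 rho tau rho01 tau01
  (dyadic_rho_powR p_gt1) N) _.
rewrite /hardy_const -mulrA; apply: ler_wpM2l.
  exact: ltW (@schur_const_gt0 R p rho tau rho01 tau01).
apply: le_trans (sum_block_weight_le _ _ N _ p_gt1 esumE) _.
by rewrite -mulrA mulr_natl mulr2n.
Qed.

End ApBound.

Theorem mainTheorem11 (R : realType) (p : R) (hp1 : 1 < p) :
  exists C : R, 0 < C /\
    forall a : int -> R[i], (Ap p a <= C%:E * RHSp p a)%E.
Proof.
have p_gt0 : 0 < p by exact: lt_trans hp1.
have C_gt0 := hardy_const_gt0 hp1.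
exists (hardy_const p `^ p^-1); split => [|a]; first exact: powR_gt0.
rewrite ApE /RHSp.
set E := (\esum_(k in _) _)%E.
have E_ge0 : (0 <= E)%E by apply: esum_ge0 => k _; rewrite lee_fin mulr_ge0 ?powR_ge0.
have [->|E_neq] := eqVneq E +oo%E.
  by rewrite poweRyr ?invr_eq0 ?gt_eqF // mulry gtr0_sg ?mul1e ?leey ?powR_gt0.
have E_fin : E \is a fin_num by rewrite ge0_fin_numE // lt_neqAle E_neq leey.
have e_ge0 : 0 <= fine E by exact: fine_ge0.
rewrite -(fineK E_fin) poweR_EFin -EFinM -powRM ?(ltW C_gt0) // -poweR_EFin.
apply: gt0_ler_poweR; rewrite ?invr_ge0 ?(ltW p_gt0) //.
- by rewrite in_itv /= leey andbT nneseries_ge0 // => k _ _; exact: poweR_ge0.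
- by rewrite in_itv /= leey andbT lee_fin mulr_ge0 ?(ltW C_gt0).
- by apply: Ap_series_le => //; rewrite fineK.
Qed.
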